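(* Let $q$ be an odd prime power, $d$ a positive integer, $\varphi_d$ the coloring defined below, and $t\ge 2$ an integer. No affine subspace of $\mathbb{F}_q^d$ of dimension $t-2$ contains a $t$-falling star of $(\mathbb{F}_q^* )^d$ under $\varphi_d$. Consequently, $\mathrm{af}(S) \ge \mathrm{FS}(S) - 1$ for every nonempty finite subset $S \subseteq (\mathbb{F}_q^* )^d$.
   Context: $\mathbb{F}_q^*$ is the set of nonzero elements of $\mathbb{F}_q$, endowed with an arbitrary fixed linear order; $(\mathbb{F}_q^* )^d$ is ordered lexicographically with respect to it. Let $C_d = \mathrm{DOT} \sqcup \mathrm{ZERO}\sqcup\mathrm{UP}\sqcup\mathrm{DOWN}$, where $\mathrm{DOT} = \mathbb{F}_q^*$ and ZERO, UP, DOWN are three disjoint copies of $\{1,\dots,d\}\times \mathbb{F}_q$. For distinct $x<y$ in $(\mathbb{F}_q^* )^d$, let $i$ be the first coordinate where $x$ and $y$ differ, and $x\cdot y$ the standard dot product; $\varphi_d(x,y)=\varphi_d(y,x)$ is $(i,x_i+y_i)$ in ZERO if $x\cdot y=0$; $(i,x_i+y_i)$ in UP if $x\cdot y\ne 0$ and $x\cdot y=x\cdot x$; $(i,x_i+y_i)$ in DOWN if $x\cdot y\notin\{0,x\cdot x\}$ and $x\cdot y=y\cdot y$; and $x\cdot y\in\mathrm{DOT}$ otherwise. Distinct vectors $s_1,\dots,s_t$ form a $t$-falling star under $\varphi_d$ if there are colors $\alpha_2,\dots,\alpha_t$ with $\varphi_d(s_i,s_j)=\alpha_i$ for all $1\le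 j<i\le t$ (i.e., after some labeling, each vector's edges to all earlier vectors share one color). $\mathrm{FS}(S)$ is the maximum $t$ such that $S$ contains a $t$-falling star; $\mathrm{af}(S)$ is the dimension of the affine hull of $S$. *)

From HB Require Import structures.
From mathcomp Require Import all_boot all_order all_algebra.
Set Implicit Arguments. Unset Strict Implicit. Unset Printing Implicit Defensive.
Import GRing.Theory.
Local Open Scope ring_scope.

Section Coloring.
Variables (F : finFieldType) (d : nat).
(* A linear order on F^* is given by an injective ranking rk : F -> nat;
   a <_F b  iff  rk a < rk b. *)
Variable rk : F -> nat.

Definition vec := 'rV[F]_d.

Definition nzvec : pred vec := fun x => [forall i : 'I_d, x 0 i != 0].

Definition dotv (x y : vec) : F := \sum_(i < d) x 0 i * y 0 i.

Definition firstdiff (x y : vec) : option 'I_d :=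
  [pick i : 'I_d | (x 0 i != y 0 i) &&
                   [forall j : 'I_d, (j < i)%N ==> (x ord0 j == y ord0 j)]].

Definition lexlt (x y : vec) : bool :=
  if firstdiff x y is Some i then (rk (x ord0 i) < rk (y ord0 i))%N else false.

(* C_d = DOT + ZERO + UP + DOWN, with ZERO, UP, DOWN copies of {1..d} x F
   (index i : 'I_d stands for i+1). DOT values are only ever nonzero. *)
Definition color : finType :=
  ((F + ('I_d * F)) + (('I_d * F) + ('I_d * F)))%type.
Definition cDOT (a : F) : color := inl (inl a).
Definition cZERO (i : 'I_d) (a : F) : color := inl (inr (i, a)).
Definition cUP (i : 'I_d) (a : F) : color := inr (inl (i, a)).
Definition cDOWN (i : 'I_d) (a : F) : color := inr (inr (i, a)).

(* the color of {x, y} assuming x < y (lexicographically) *)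
Definition phi0 (x y : vec) : color :=
  match firstdiff x y with
  | Some i =>
      let s := x 0 i + y 0 i in
      if dotv x y == 0 then cZERO i s
      else if dotv x y == dotv x x then cUP i s
      else if dotv x y == dotv y y then cDOWN i s
      else cDOT (dotv x y)
  | None => cDOT 0 (* x = y: irrelevant *)
  end.

Definition phi (x y : vec) : color :=
  if lexlt x y then phi0 x y else phi0 y x.

Definition falling_star (P : pred vec) (t : nat) (s : 'I_t -> vec) : Prop :=
  [/\ injective s, (forall i, P (s i)) &
      exists alpha : 'I_t -> color,
        forall i j : 'I_t, (j < i)%N -> phi (s i) (s j) = alpha i].

Definition has_falling_star (S : {set vec}) (t : nat) : bool :=
  [exists s : {ffun 'I_t -> vec},
     [&& injectiveb s, [forall i, s i \in S] &
      [exists alpha : {ffun 'I_t -> color},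
        [forall i : 'I_t, forall j : 'I_t,
           (j < i)%N ==> (phi (s i) (s j) == alpha i)]]]].

(* FS(S): the maximal t such that S contains a t-falling star
   (a t-falling star has t distinct vertices, so t <= #|S|) *)
Definition FS (S : {set vec}) : nat :=
  \max_(t < #|S|.+1 | has_falling_star S t) t.

(* af(S): dimension of the affine hull of S (for S nonempty) *)
Definition af (S : {set vec}) : nat :=
  let s0 := odflt 0 [pick s in S] in
  \dim <<[seq s - s0 | s <- enum S]>>%VS.

End Coloring.

From HB Require Import structures.
From mathcomp Require Import all_boot all_order all_algebra.
Set Implicit Arguments. Unset Strict Implicit. Unset Printing Implicit Defensive.
Import GRing.Theory.
Local Open Scope ring_scope.

(* The common color of the edges from
   s_k to its predecessors cuts out a hyperplane through all of s_0, ..., s_(k-1)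
   that misses s_k: a DOT color b gives {v | s_k . v = b} (b differs from
   s_k . s_k), and a coordinate color (i, a) gives {v | v_i = a - s_k,i} (the
   color records x_i + y_i at a coordinate where x_i <> y_i).  Hence each
   difference s_k - s_0 avoids the span of the earlier ones, the t differences
   are linearly independent, and every affine subspace containing the star has
   dimension at least t.  Neither the parity of q, nor the nonzero coordinates,
   nor the chosen order on F_q^* plays any role. *)

Section AffineIndependence.
Variables (K : fieldType) (vT : vectType K).

Lemma linear_span_eq0 (L : {linear vT -> K^o}) (X : seq vT) v :
  {in X, forall x, L x = 0} -> v \in <<X>>%VS -> L v = 0.
Proof.
move=> LX /(@coord_span _ _ _ (in_tuple X)) ->.
by rewrite linear_sum big1 // => i _; rewrite linearZ /= LX ?scaler0 // mem_nth.
Qed.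

Definition diffs (p : nat -> vT) n := [seq p i - p 0%N | i <- iota 1 n].

Lemma free_diffs (p : nat -> vT) n :
  (forall k, (k < n)%N -> exists (L : {linear vT -> K^o}) c,
     (forall j, (j <= k)%N -> L (p j) = c) /\ L (p k.+1) != c) ->
  free (diffs p n).
Proof.
elim: n => [|n IHn] sep; first by rewrite /free span_nil dimv0.
rewrite /diffs -[n.+1]addn1 iotaD map_cat (perm_free (permEl (perm_catC _ _))) free_cons.
rewrite IHn ?andbT; last by move=> k lt_kn; apply: sep; rewrite ltnS ltnW.
have [L [c [Lpj Lpn]]] := sep n (ltnSn n).
apply: contra Lpn => /linear_span_eq0 Ldiff0.
rewrite -subr_eq0 -(Lpj 0%N) // -linearB Ldiff0 // => _ /mapP[j + ->].
by rewrite mem_iota add1n ltnS => /andP[_ le_jn]; rewrite linearB !Lpj // subrr.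
Qed.

Lemma diffs_dim (p : nat -> vT) n (V : {vspace vT}) a :
  free (diffs p n) -> (forall j, (j <= n)%N -> p j - a \in V) -> (n <= \dim V)%N.
Proof.
move=> /eqP dim_diffs pV.
rewrite -{1}[n](size_iota 1) -(size_map (fun i => p i - p 0%N)) -dim_diffs.
apply/dimvS/span_subvP => x /mapP[j + ->].
rewrite mem_iota add1n ltnS => /andP[_ le_jn].
have -> : p j - p 0%N = (p j - a) - (p 0%N - a) by rewrite opprB addrA subrK.
by rewrite memvB ?pV.
Qed.

End AffineIndependence.

Section Coloring.
Variables (F : finFieldType) (d : nat) (rk : F -> nat).
Local Notation vec := 'rV[F]_d.

Lemma dotv_is_linear (w : vec) : linear (dotv w : vec -> F^o).
Proof.
move=> k u v; rewrite /dotv scaler_sumr -big_split; apply: eq_bigr => i _ /=.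
by rewrite !mxE mulrDr mulrCA.
Qed.

HB.instance Definition _ (w : vec) :=
  GRing.isLinear.Build F vec F^o *:%R (dotv w) (dotv_is_linear w).

Lemma dotvC (x y : vec) : dotv x y = dotv y x.
Proof. by apply: eq_bigr => i _; rewrite mulrC. Qed.

Lemma dotv_delta (i : 'I_d) (v : vec) : dotv (delta_mx 0 i) v = v 0 i.
Proof.
rewrite /dotv (bigD1 i) //= big1 => [|j /negPf neq_ji].
  by rewrite mxE !eqxx mul1r addr0.
by rewrite mxE neq_ji mul0r.
Qed.

Lemma firstdiffP (x y : vec) :
  x != y -> exists2 i, firstdiff x y = Some i & x 0 i != y 0 i.
Proof.
move=> neq_xy; rewrite /firstdiff; case: pickP => [i /andP[neq_i _]|none].
  by exists i.
have /existsP[i neq_i] : [exists i, x 0 i != y 0 i].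
  apply: contraNT neq_xy => /existsPn eq_xy; apply/eqP/rowP => j.
  exact/eqP/negbNE/eq_xy.
have [j neq_j min_j] := @arg_minnP _ i (fun j => x 0 j != y 0 j) val neq_i.
move: (none j); rewrite neq_j /= => /negbT/negP[].
apply/forallP => k; apply/implyP => lt_kj.
by apply: contraTT lt_kj => /min_j; rewrite -leqNgt.
Qed.

Definition color_normal (x : vec) (c : color F d) : vec :=
  match c with
  | inl (inl _) => x
  | inl (inr (i, _)) | inr (inl (i, _)) | inr (inr (i, _)) => delta_mx 0 i
  end.

Definition color_level (x : vec) (c : color F d) : F :=
  match c with
  | inl (inl b) => b
  | inl (inr (i, s)) | inr (inl (i, s)) | inr (inr (i, s)) => s - x 0 i
  end.

Definition color_separates (c : color F d) (x y : vec) : Prop :=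
  dotv (color_normal x c) y = color_level x c /\
  dotv (color_normal x c) x != color_level x c.

Lemma phi0_separates (x y : vec) : x != y ->
  color_separates (phi0 x y) x y /\ color_separates (phi0 x y) y x.
Proof.
move=> neq_xy; have [i fd_i neq_i] := firstdiffP neq_xy.
rewrite /phi0 fd_i /color_separates.
case: ifP => _; [|case: ifP => dot_xx; [|case: ifP => dot_yy]].
  1-3: by rewrite /= !dotv_delta addrK [x 0 i + _]addrC addrK neq_i eq_sym neq_i.
by rewrite /= (dotvC y x) [dotv x x == _]eq_sym [dotv y y == _]eq_sym dot_xx dot_yy.
Qed.

Lemma phi_separates (x y : vec) : x != y -> color_separates (phi rk x y) x y.
Proof.
move=> neq_xy; rewrite /phi; case: ifP => _; first exact: (phi0_separates neq_xy).1.
by rewrite eq_sym in neq_xy; exact: (phi0_separates neq_xy).2.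
Qed.

Lemma falling_star_dim (P : pred vec) t (s : 'I_t.+1 -> vec) (V : {vspace vec}) a :
  falling_star rk P s -> (forall i, s i - a \in V) -> (t <= \dim V)%N.
Proof.
case=> inj_s _ [alpha s_alpha] sV; pose p n := s (inord n).
apply: (@diffs_dim _ _ p _ _ a) => [|j _]; last exact: sV.
apply: free_diffs => k lt_kt; pose c := alpha (inord k.+1).
have sep j : (j <= k)%N -> color_separates c (p k.+1) (p j).
  move=> le_jk; have lt_jt : (j < t.+1)%N := leq_trans le_jk (ltnW lt_kt).
  have lt_jk1 : (@inord t j < @inord t k.+1)%N by rewrite !inordK.
  rewrite /c -(s_alpha _ _ lt_jk1); apply: phi_separates.
  by rewrite (inj_eq inj_s) -val_eqE /= !inordK // gtn_eqF.
exists (dotv (color_normal (p k.+1) c)), (color_level (p k.+1) c).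
by split=> [j /sep[]|]; [|case: (sep 0%N isT)].
Qed.

Lemma has_falling_starP (S : {set vec}) t :
  reflect (exists s : 'I_t -> vec, falling_star rk [in S] s)
          (has_falling_star rk S t).
Proof.
apply: (iffP existsP) => [[s /and3P[/injectiveP inj_s /forallP sS]]|[s [inj_s sS]]].
  move=> /existsP[alpha /forallP s_alpha]; exists s; split=> //.
  by exists alpha => i j lt_ji; apply/eqP/(implyP (forallP (s_alpha i) j)).
case=> alpha s_alpha; exists [ffun i => s i]; apply/and3P; split.
- by apply/injectiveP => i j; rewrite !ffunE => /inj_s.
- by apply/forallP => i; rewrite ffunE sS.
apply/existsP; exists [ffun i => alpha i]; apply/forallP => i; apply/forallP => j.
by apply/implyP => lt_ji; rewrite !ffunE s_alpha.
Qed.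

Lemma leq_FS_af (S : {set vec}) : (FS rk S <= (af S).+1)%N.
Proof.
apply/bigmax_leqP => -[[|t] _] //= /has_falling_starP[s star_s].
apply: (falling_star_dim star_s) => i; apply/memv_span/map_f.
by case: star_s => _ sS _; rewrite mem_enum sS.
Qed.

End Coloring.

Theorem lemma3p9 (F : finFieldType) (d : nat) (rk : F -> nat) :
  odd #|F| -> (0 < d)%N -> injective rk ->
  (forall (t : nat), (2 <= t)%N ->
     forall (V : {vspace 'rV[F]_d}) (a : 'rV[F]_d),
       \dim V = (t - 2)%N ->
       ~ exists s : 'I_t -> 'rV[F]_d,
           falling_star rk (nzvec (d:=d)) s /\ (forall i, s i - a \in V)) /\
  (forall S : {set 'rV[F]_d},
     S != set0 -> {subset S <= nzvec (d:=d)} ->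
     (FS rk S - 1 <= af S)%N).
Proof.
move=> _ _ _; split=> [[|t] // le2t V a dimV [s [star_s sV]]|S _ _].
  by have := falling_star_dim star_s sV; rewrite dimV subSS subn1 leqNgt ltn_predL -ltnS le2t.
by rewrite leq_subLR add1n leq_FS_af.
Qed.
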